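(* Let $\rho$ be the automorphism of $\mathcal A_\theta^{alg}$ with $\rho\cdot U_1=U_2^{-1}$, $\rho\cdot U_2=U_1$, and let $H^0(\mathcal A_\theta^{alg},{}_{\rho}\mathcal A_\theta^{alg\ast})$ be the space of formal series $\varphi=\sum\varphi_{n,m}U_1^nU_2^m$ with $(\rho\cdot a)\varphi=\varphi a$ for all $a\in\mathcal A_\theta^{alg}$. Then every such $\varphi$ is determined by the two coefficients $\varphi_{0,0},\varphi_{0,1}$ (which generate the space), and: if $m+n\equiv0\pmod2$ then $\varphi_{n,m}=\lambda^{\frac{m^2+n^2+2mn}{4}}\varphi_{0,0}$; if $m+n\equiv1\pmod 2$ then $\varphi_{n,m}=\lambda^{\frac{m^2+n^2+2mn-1}{4}}\varphi_{0,1}$.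
   Context: Let $\theta\in\mathbb R\setminus\mathbb Q$, $\lambda=e^{2\pi i\theta}$, $\lambda^s:=e^{2\pi i\theta s}$. $\mathcal A_\theta^{alg}$ is the complex algebra of finite sums $\sum a_{n,m}U_1^nU_2^m$ with $U_1,U_2$ invertible and $U_2U_1=\lambda U_1U_2$; formal series $\sum_{(n,m)\in\mathbb Z^2}\varphi_{n,m}U_1^nU_2^m$ with arbitrary coefficients form an $\mathcal A_\theta^{alg}$-bimodule via left/right multiplication. The automorphism $\rho$ generates the copy of $\mathbb Z_4\subset SL(2,\mathbb Z)$ acting on $\mathcal A_\theta^{alg}$ (the paper denotes it $i$). *)

From HB Require Import structures.
From mathcomp Require Import all_boot all_order all_algebra.
From mathcomp Require Import reals trigo.
From mathcomp Require Import complex.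
Set Implicit Arguments. Unset Strict Implicit. Unset Printing Implicit Defensive.
Import Order.TTheory GRing.Theory Num.Theory.
Local Open Scope ring_scope.
Local Open Scope complex_scope.

Section NCTorus.
Variable R : realType.
Local Notation C := R[i].

Definition lam (theta : R) : C := (cos (2 * pi * theta)) +i* (sin (2 * pi * theta)).

(* Formal series  phi = sum_{(n,m) in Z^2} phi n m U1^n U2^m  (arbitrary coefficients). *)
Definition series := int -> int -> C.

(* Elements of A_theta^alg: finite sums  sum_k c_k U1^{n_k} U2^{m_k},
   encoded as a finite list of triples ((n_k, m_k), c_k). *)
Definition alg := seq ((int * int) * C).

Variable theta : R.
Local Notation l := (lam theta).

(* Left / right multiplication of a formal series by the generators and their
   inverses, computed from U2 U1 = lambda U1 U2 with normal form U1^n U2^m. *)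
Definition lU1 (f : series) : series := fun n m => f (n - 1) m.
Definition lU1inv (f : series) : series := fun n m => f (n + 1) m.
Definition lU2 (f : series) : series := fun n m => l ^ n * f n (m - 1).
Definition lU2inv (f : series) : series := fun n m => l ^ (- n) * f n (m + 1).
Definition rU1 (f : series) : series := fun n m => l ^ m * f (n - 1) m.
Definition rU1inv (f : series) : series := fun n m => l ^ (- m) * f (n + 1) m.
Definition rU2 (f : series) : series := fun n m => f n (m - 1).
Definition rU2inv (f : series) : series := fun n m => f n (m + 1).

Definition zpow (g ginv : series -> series) (k : int) (f : series) : series :=
  match k with
  | Posz j => iter j g f
  | Negz j => iter j.+1 ginv f
  end.

Definition sadd (f g : series) : series := fun n m => f n m + g n m.
Definition sscale (c : C) (f : series) : series := fun n m => c * f n m.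
Definition szero : series := fun _ _ => 0.

(* (U1^a U2^b) phi = U1^a (U2^b phi) *)
Definition lmono (a b : int) (f : series) : series :=
  zpow lU1 lU1inv a (zpow lU2 lU2inv b f).
(* phi (U1^a U2^b) = (phi U1^a) U2^b *)
Definition rmono (f : series) (a b : int) : series :=
  zpow rU2 rU2inv b (zpow rU1 rU1inv a f).

Definition lmul (x : alg) (f : series) : series :=
  foldr (fun t acc => sadd (sscale t.2 (lmono t.1.1 t.1.2 f)) acc) szero x.
Definition rmul (f : series) (x : alg) : series :=
  foldr (fun t acc => sadd (sscale t.2 (rmono f t.1.1 t.1.2)) acc) szero x.

(* The automorphism rho (rho U1 = U2^{-1}, rho U2 = U1) acting on the left:
   rho(U1^a U2^b) = (U2^{-1})^a U1^b, so left multiplication by rho(c U1^a U2^b)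
   is  c * L_{U2}^{-a} o L_{U1}^{b}. *)
Definition lmul_rho (x : alg) (f : series) : series :=
  foldr (fun t acc =>
           sadd (sscale t.2 (zpow lU2 lU2inv (- t.1.1) (zpow lU1 lU1inv t.1.2 f))) acc)
        szero x.

Definition H0_rho (f : series) : Prop :=
  forall x : alg, lmul_rho x f = rmul f x.

End NCTorus.

From HB Require Import structures.
From mathcomp Require Import all_boot all_order all_algebra.
From mathcomp Require Import reals trigo.
From mathcomp Require Import complex.
From mathcomp Require Import zify ring.
From Stdlib Require Import FunctionalExtensionality.
Import Order.TTheory GRing.Theory Num.Theory.
Local Open Scope ring_scope.
Set Implicit Arguments. Unset Strict Implicit.

(* Invariance under the generator U2 reads phi_{n-1,m} = phi_{n,m-1}, so
   phi_{n,m} = g(n+m) depends only on n+m; invariance under U1 then becomes the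
   twisted recurrence g(k+1) = lambda^k g(k-1).  Iterating it gives
   g(k+a) = lambda^(ak) g(k-a), and taking k = a or k = a+1 yields the closed form
   in terms of g(0), g(1).  Conversely, for such phi the invariance condition for
   any monomial U1^a U2^b is an instance of the iterated recurrence. *)

Lemma int_ind_step (P : int -> Prop) :
  P 0 -> (forall k, P k <-> P (k + 1)) -> forall k, P k.
Proof.
move=> P0 step; elim/int_ind => [//|n Pn|n Pn].
- by rewrite -addn1 PoszD -step.
- by apply/(step _).2; rewrite (_ : - n.+1%:Z + 1 = - n%:Z) //; lia.
Qed.

Lemma int_even_or_odd (t : int) : exists j, t = j * 2 \/ t = j * 2 + 1.
Proof. by exists (t %/ 2)%Z; lia. Qed.

Section TwistedRecurrence.
Variables (F : fieldType) (l : F).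
Hypothesis l_neq0 : l != 0.

Definition twisted_rec (g : int -> F) := forall k, g (k + 1) = l ^ k * g (k - 1).

Definition twisted_sol (c0 c1 : F) (t : int) : F :=
  if ~~ odd `|t| then l ^ ((t ^+ 2) %/ 4)%Z * c0 else l ^ ((t ^+ 2 - 1) %/ 4)%Z * c1.

Lemma twisted_sol_even c0 c1 j : twisted_sol c0 c1 (j * 2) = l ^ (j * j) * c0.
Proof. by rewrite /twisted_sol ifT; [congr (l ^ _ * _); rewrite expr2; nia | lia]. Qed.

Lemma twisted_sol_odd c0 c1 j : twisted_sol c0 c1 (j * 2 + 1) = l ^ (j * (j + 1)) * c1.
Proof. by rewrite /twisted_sol ifF; [congr (l ^ _ * _); rewrite expr2; nia | lia]. Qed.

Lemma expfz_mul_eq a b c (x y : F) :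
  a + b = c -> x = y -> l ^ a * (l ^ b * x) = l ^ c * y.
Proof. by move=> <- ->; rewrite mulrA expfzDr. Qed.

Lemma twisted_sol_rec c0 c1 : twisted_rec (twisted_sol c0 c1).
Proof.
move=> k; have [j [->|->]] := int_even_or_odd k.
- rewrite (_ : j * 2 - 1 = (j - 1) * 2 + 1); last ring.
  by rewrite !twisted_sol_odd; symmetry; apply: expfz_mul_eq; first ring.
- rewrite (_ : j * 2 + 1 + 1 = (j + 1) * 2); last ring.
  rewrite (_ : j * 2 + 1 - 1 = j * 2); last ring.
  by rewrite !twisted_sol_even; symmetry; apply: expfz_mul_eq; first ring.
Qed.

Lemma twisted_rec_iter g : twisted_rec g ->
  forall a k, g (k + a) = l ^ (a * k) * g (k - a).
Proof.
move=> rec; elim/int_ind_step => [k|a]; first by rewrite mul0r expr0z mul1r subr0.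
split=> IH k.
- rewrite (_ : k + (a + 1) = k + 1 + a); last ring.
  rewrite IH (_ : k + 1 - a = k - a + 1); last ring.
  by rewrite rec; apply: expfz_mul_eq; [ring | congr g; ring].
- rewrite (_ : k + a = k - 1 + (a + 1)); last ring.
  rewrite IH [in RHS](_ : k - a = k - a - 1 + 1); last ring.
  by rewrite rec; symmetry; apply: expfz_mul_eq; [ring | congr g; ring].
Qed.

Lemma twisted_recP g : twisted_rec g <-> g =1 twisted_sol (g 0) (g 1).
Proof.
split=> [rec t | eq_g k]; last first.
  by rewrite (eq_g (k + 1)) (eq_g (k - 1)); apply: twisted_sol_rec.
have iter := twisted_rec_iter rec.
have [j [->|->]] := int_even_or_odd t.
- rewrite twisted_sol_even (_ : j * 2 = j + j); last ring.
  by rewrite iter subrr.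
- rewrite twisted_sol_odd (_ : j * 2 + 1 = j + 1 + j); last ring.
  by rewrite iter addrAC subrr add0r.
Qed.

End TwistedRecurrence.

Lemma lam_neq0 (R : realType) (theta : R) : lam theta != 0.
Proof.
apply/eqP; rewrite /lam => -[hc hs].
have := cos2Dsin2 (2 * pi * theta); rewrite hc hs expr0n /= addr0.
by move/eqP; rewrite eq_sym oner_eq0.
Qed.

Lemma zpow_orbitE (R : realType) (g ginv : series R -> series R)
    (F : int -> series R) (f : series R) :
  F 0 = f -> (forall k, g (F k) = F (k + 1)) -> (forall k, ginv (F k) = F (k - 1)) ->
  forall k, zpow g ginv k f = F k.
Proof.
move=> F0 Fg Fginv [j|j] /=.
- elim: j => [|j IH] /=; first by rewrite F0.
  by rewrite IH Fg; congr F; lia.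
- elim: j => [|j IH] /=; first by rewrite -F0 Fginv.
  by rewrite IH Fginv; congr F; rewrite !NegzE; lia.
Qed.

Lemma antidiagonal_shift (T : Type) (f : int -> int -> T) :
  (forall n m, f (n - 1) m = f n (m - 1)) -> forall n m, f n m = f 0 (n + m).
Proof.
move=> step n m.
have shift k : f (n - (k + 1)) (m + (k + 1)) = f (n - k) (m + k).
  by rewrite -[m + k](addrK 1) -step; congr f; ring.
have /(_ n) : forall k, f (n - k) (m + k) = f n m.
  by apply: int_ind_step => [|k]; [rewrite subr0 addr0 | rewrite shift].
by rewrite subrr addrC => <-.
Qed.

Section RhoInvariants.
Variables (R : realType) (theta : R).
Local Notation l := (lam theta).
Let l_neq0 : l != 0 := lam_neq0 theta.

Lemma zpow_lU1 (f : series R) k : zpow (@lU1 R) (@lU1inv R) k f = fun n m => f (n - k) m.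
Proof.
apply: (zpow_orbitE (F := fun k n m => f (n - k) m)) => [|j|j];
  extensionality n; extensionality m; rewrite /lU1 /lU1inv ?subr0 //; congr f; ring.
Qed.

Lemma zpow_rU2 (f : series R) k : zpow (@rU2 R) (@rU2inv R) k f = fun n m => f n (m - k).
Proof.
apply: (zpow_orbitE (F := fun k n m => f n (m - k))) => [|j|j];
  extensionality n; extensionality m; rewrite /rU2 /rU2inv ?subr0 //; congr f; ring.
Qed.

Lemma zpow_lU2 (f : series R) k :
  zpow (lU2 theta) (lU2inv theta) k f = fun n m => l ^ (k * n) * f n (m - k).
Proof.
apply: (zpow_orbitE (F := fun k n m => l ^ (k * n) * f n (m - k))) => [|j|j];
  extensionality n; extensionality m; rewrite /lU2 /lU2inv /=.
- by rewrite mul0r expr0z mul1r subr0.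
- by apply: (expfz_mul_eq l_neq0); [ring | congr f; ring].
- by apply: (expfz_mul_eq l_neq0); [ring | congr f; ring].
Qed.

Lemma zpow_rU1 (f : series R) k :
  zpow (rU1 theta) (rU1inv theta) k f = fun n m => l ^ (k * m) * f (n - k) m.
Proof.
apply: (zpow_orbitE (F := fun k n m => l ^ (k * m) * f (n - k) m)) => [|j|j];
  extensionality n; extensionality m; rewrite /rU1 /rU1inv /=.
- by rewrite mul0r expr0z mul1r subr0.
- by apply: (expfz_mul_eq l_neq0); [ring | congr f; ring].
- by apply: (expfz_mul_eq l_neq0); [ring | congr f; ring].
Qed.

Lemma H0_rho_monomialP (f : series R) : H0_rho theta f <->
  forall a b, zpow (lU2 theta) (lU2inv theta) (- a) (zpow (@lU1 R) (@lU1inv R) b f)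
              = rmono theta f a b.
Proof.
split=> [H a b | H x].
- extensionality n; extensionality m.
  have := congr1 (fun F => F n m) (H [:: ((a, b), 1)]).
  by rewrite /lmul_rho /rmul /= /sadd /sscale /szero !mul1r !addr0.
- by elim: x => [|[[a b] c] x IH] //=; rewrite IH H.
Qed.

Lemma H0_rhoE (f : series R) : H0_rho theta f <->
  forall a b n m,
    l ^ (- (a * n)) * f (n - b) (m + a) = l ^ (a * (m - b)) * f (n - a) (m - b).
Proof.
rewrite H0_rho_monomialP /rmono.
split=> H a b.
- move=> n m; have := congr1 (fun F => F n m) (H a b).
  by rewrite zpow_lU2 zpow_lU1 zpow_rU2 zpow_rU1 /= mulNr opprK.
- rewrite zpow_lU2 zpow_lU1 zpow_rU2 zpow_rU1.
  by extensionality n; extensionality m; rewrite mulNr opprK H.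
Qed.

Lemma H0_rho_diagonalP (f : series R) :
  H0_rho theta f <-> twisted_rec l (f 0) /\ forall n m, f n m = f 0 (n + m).
Proof.
rewrite H0_rhoE; split=> [H | [rec diag] a b n m].
- have diag : forall n m, f n m = f 0 (n + m).
    apply: antidiagonal_shift => n m.
    by have := H 0 1 n m; rewrite !mul0r oppr0 expr0z !mul1r addr0 subr0.
  split=> // k; have := H 1 0 0 k.
  rewrite mulr0 oppr0 expr0z mul1r !addr0 mul1r => ->.
  by rewrite (diag (0 - 1)) sub0r addrC.
- rewrite (diag (n - b)) (diag (n - a)) (_ : n - b + (m + a) = n + m - b + a); last ring.
  rewrite (twisted_rec_iter l_neq0 rec a).
  by apply: (expfz_mul_eq l_neq0); [ring | congr f; ring].
Qed.

Lemma H0_rho_closedP (f : series R) :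
  H0_rho theta f <-> forall n m, f n m = twisted_sol l (f 0 0) (f 0 1) (n + m).
Proof.
rewrite H0_rho_diagonalP (twisted_recP l_neq0); split=> [[eq_f0 diag] n m | eq_f].
- by rewrite diag eq_f0.
- split=> [t | n m]; first by rewrite eq_f add0r.
  by rewrite (eq_f n) (eq_f 0 (n + m)) add0r.
Qed.

End RhoInvariants.

Theorem mainTheorem5 (R : realType) (theta : R)
  (Htheta : forall q : rat, theta != ratr q)
  (phi : series R) :
  H0_rho theta phi <->
  (forall n m : int,
     phi n m =
       if ~~ odd (absz (n + m))
       then lam theta ^ ((m ^+ 2 + n ^+ 2 + 2 * m * n) %/ 4)%Z * phi 0 0
       else lam theta ^ ((m ^+ 2 + n ^+ 2 + 2 * m * n - 1) %/ 4)%Z * phi 0 1).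
Proof.
have sqrD n m : (n + m) ^+ 2 = m ^+ 2 + n ^+ 2 + 2 * m * n :> int by ring.
by rewrite H0_rho_closedP /twisted_sol; split=> H n m; rewrite H sqrD.
Qed.
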